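(* TC-Approval is monotonic, while UC-Approval and CO-Approval are not monotonic.
   Context: A tournament $T=(V(T),\succ)$ is a finite set of candidates with an asymmetric and complete binary relation $\succ$; $N^+_T(c)=\{b:c\succ b\}$ and $T[B]$ is the induced subtournament. Tournament solutions: the top cycle $TC(T)$ is the unique minimal nonempty $X\subseteq V(T)$ with $x\succ y$ for all $x\in X$, $y\notin X$; the Copeland set $CO(T)$ is the set of candidates of maximum outdegree; the uncovered set $UC(T)$ is the set of kings, where $a$ is a king if for every $b\neq a$, either $a\succ b$ or there is $c$ with $a\succ c\succ b$. An election $\mathcal{E}=(\mathcal{C},\mathcal{T})$ has a finite candidate set and a finite list of votes, each a tournament on $\mathcal{C}$. For a tournament solution $f$, $f$-Approval gives candidate $c$ score $|\{T\in\mathcal{T}: c\in f(T)\}|$ (with multiplicity); winners are those of highest score. A voting correspondence $\varphi$ is monotonic if for every two elections $\mathcal{E}=(\mathcal{C},(T_1,\dots,T_n))$, $\mathcal{E}'=(\mathcal{C},(T'_1,\dots,T'_n))$ and every $c\in\varphi(\mathcal{E})$ such that for every $i$, $T_i[\mathcal{C}\setminus\{c\}]=T'_i[\mathcal{C}\setminus\{c\}]$ and $N^+_{T_i}(c)\subseteq N^+_{T'_i}(c)$, it holds that $c\in\varphi(\mathcal{E}')$. *)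

From mathcomp Require Import all_boot.
Set Implicit Arguments. Unset Strict Implicit. Unset Printing Implicit Defensive.

Record tournament (C : finType) := Tournament {
  tbeats :> rel C;
  tbeats_irr : forall x, ~~ tbeats x x;
  tbeats_asym : forall x y, tbeats x y -> ~~ tbeats y x;
  tbeats_total : forall x y, x != y -> tbeats x y || tbeats y x
}.

Definition tsolution := forall C : finType, tournament C -> {set C}.

Definition vcorrespondence :=
  forall (C : finType) (n : nat), ('I_n -> tournament C) -> {set C}.

Section Solutions.
Variables (C : finType) (T : tournament C).

Definition dominant_nonempty (X : {set C}) : bool :=
  (X != set0) && [forall x in X, forall y in ~: X, T x y].

(* Top cycle: the (unique) minimal nonempty dominant set. *)
Definition TC : {set C} :=
  [set x | [exists X : {set C}, minset dominant_nonempty X && (x \in X)]].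

Definition outdeg (a : C) : nat := #|[set b | T a b]|.

Definition CO : {set C} := [set a | [forall b, outdeg b <= outdeg a]].

(* Uncovered set: the set of kings. *)
Definition king (a : C) : bool :=
  [forall b, (b != a) ==> (T a b || [exists c, T a c && T c b])].
Definition UC : {set C} := [set a | king a].

End Solutions.

Definition approval_score (f : tsolution) (C : finType) (n : nat)
  (votes : 'I_n -> tournament C) (c : C) : nat :=
  #|[set i : 'I_n | c \in f C (votes i)]|.

Definition approval (f : tsolution) : vcorrespondence :=
  fun C n votes =>
    [set c | [forall d, approval_score f votes d <= approval_score f votes c]].

Definition improves (C : finType) (c : C) (T T' : tournament C) : Prop :=
  (forall x y, x != c -> y != c -> T x y = T' x y) /\
  (forall b, T c b -> T' c b).

Definition monotonic (phi : vcorrespondence) : Prop :=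
  forall (C : finType) (n : nat) (votes votes' : 'I_n -> tournament C) (c : C),
    (forall i, improves c (votes i) (votes' i)) ->
    c \in phi C n votes -> c \in phi C n votes'.

From mathcomp Require Import all_boot.
Set Implicit Arguments. Unset Strict Implicit. Unset Printing Implicit Defensive.

(* The nonempty dominant sets of a tournament form a chain, and the top cycle
   is their intersection. When c is strengthened, a dominant set containing c
   stays dominant, and a new dominant set avoiding c was dominant already.
   Hence c stays in the top cycle, and a rival enters the top cycle only in a
   vote where c enters it too: in every vote the approval gain of c is at least
   that of any rival. For UC and CO, explicit elections with four candidates
   and two votes break monotonicity. *)

Section Dominance.
Variables (C : finType) (T : tournament C).
Implicit Types X Y : {set C}.

Lemma dominantP X :
  reflect (X != set0 /\ forall x y, x \in X -> y \notin X -> T x y)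
          (dominant_nonempty T X).
Proof.
apply: (iffP andP) => -[X0 domX]; split=> //.
  by move=> x y xX yX; move/forall_inP/(_ x xX)/forall_inP: domX; apply; rewrite inE.
apply/forall_inP=> x xX; apply/forall_inP=> y; rewrite inE; exact: domX.
Qed.

Lemma dominant_nested X Y :
  dominant_nonempty T X -> dominant_nonempty T Y -> X \subset Y \/ Y \subset X.
Proof.
move=> /dominantP[_ domX] /dominantP[_ domY].
have [|/subsetPn[x xX xY]] := boolP (X \subset Y); [by left | right].
apply/subsetP=> y yY; apply: contraT => yX.
by have := tbeats_asym (domX x y xX yX); rewrite domY.
Qed.

Lemma TCP x :
  reflect (forall Y, dominant_nonempty T Y -> x \in Y) (x \in TC T).
Proof.
rewrite inE; apply: (iffP existsP) => [[X /andP[minX xX]] Y domY | inY].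
  have [/subsetP|YX] := dominant_nested (minsetp minX) domY; first exact.
  by rewrite (minsetinf minX domY YX).
have domT : dominant_nonempty T [set: C].
  apply/dominantP; split=> [|a b _]; last by rewrite inE.
  by apply/set0Pn; exists x; rewrite inE.
have [X minX _] := minset_exists domT.
by exists X; rewrite minX inY // (minsetp minX).
Qed.

End Dominance.

Section Improvement.
Variables (C : finType) (c : C) (T T' : tournament C).
Hypothesis improve : improves c T T'.

Lemma dominant_improves X :
  dominant_nonempty T X -> c \in X -> dominant_nonempty T' X.
Proof.
move=> /dominantP[X0 domX] cX; apply/dominantP; split=> // x y xX yX.
have yc : y != c by apply: contraNneq yX => ->.
have [xc|xc] := eqVneq x c; last by rewrite -improve.1 ?domX.
by rewrite xc improve.2 // -xc domX.
Qed.

Lemma dominant_improves_notin X :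
  dominant_nonempty T' X -> c \notin X -> dominant_nonempty T X.
Proof.
move=> /dominantP[X0 domX] cX; apply/dominantP; split=> // x y xX yX.
have xc : x != c by apply: contraNneq cX => <-.
have [yc|yc] := eqVneq y c; last by rewrite improve.1 ?domX.
rewrite yc; have /orP[//|cx] := tbeats_total T xc.
by have := tbeats_asym (improve.2 _ cx); rewrite -yc domX.
Qed.

Lemma dominant_improves_beaten Y :
  dominant_nonempty T Y -> c \notin Y -> {in Y, forall y, T' y c} ->
  dominant_nonempty T' Y.
Proof.
move=> /dominantP[Y0 domY] cY beaten; apply/dominantP; split=> // x y xY yY.
have xc : x != c by apply: contraNneq cY => <-.
have [->|yc] := eqVneq y c; first exact: beaten.
by rewrite -improve.1 ?domY.
Qed.

Lemma TC_improves : c \in TC T -> c \in TC T'.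
Proof.
move=> /TCP cTC; apply/TCP=> Y domY; apply: contraT => cY.
by have := cTC _ (dominant_improves_notin domY cY); rewrite (negPf cY).
Qed.

Lemma TC_improves_subset : c \in TC T -> TC T' \subset TC T.
Proof.
move=> /TCP cTC; apply/subsetP=> d /TCP dTC'; apply/TCP=> Y domY.
exact/dTC'/dominant_improves/cTC.
Qed.

Lemma TC_improves_subset_notin : c \notin TC T' -> TC T' \subset TC T.
Proof.
move=> cTC'; apply/subsetP=> d /TCP dTC'.
have /existsP[Z /andP[domZ cZ]] : [exists Z, dominant_nonempty T' Z && (c \notin Z)].
  move: cTC'; apply: contraR => /existsPn noZ; apply/TCP=> Y domY.
  by move: (noZ Y); rewrite domY negbK.
apply/TCP=> Y domY.
have [YZ|/subsetP ZY] := dominant_nested domY (dominant_improves_notin domZ cZ);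
  last exact/ZY/dTC'.
have cY : c \notin Y by apply: contra cZ; apply: (subsetP YZ).
apply/dTC'/dominant_improves_beaten => // y /(subsetP YZ) yZ.
by case/dominantP: domZ => _ /(_ y c yZ cZ).
Qed.

Lemma TC_improves_le d :
  (d \in TC T') + (c \in TC T) <= (d \in TC T) + (c \in TC T').
Proof.
have cTC := TC_improves.
have [cT|cT] := boolP (c \in TC T).
  rewrite cTC // leq_add2r.
  by have [/(subsetP (TC_improves_subset cT)) ->|] := boolP (d \in TC T').
rewrite addn0.
have [cT'|cT'] := boolP (c \in TC T'); first exact: leq_trans (leq_b1 _) (leq_addl _ _).
by have [/(subsetP (TC_improves_subset_notin cT')) ->|] := boolP (d \in TC T').
Qed.

End Improvement.

Lemma approval_scoreE (f : tsolution) (C : finType) (n : nat)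
    (votes : 'I_n -> tournament C) (c : C) :
  approval_score f votes c = \sum_i (c \in f C (votes i)).
Proof.
rewrite /approval_score -sum1dep_card big_mkcond /=.
by apply: eq_bigr => i _; case: (_ \in _).
Qed.

Lemma approval_monotonic (f : tsolution) :
  (forall (C : finType) (c d : C) (T T' : tournament C), improves c T T' ->
     (d \in f C T') + (c \in f C T) <= (d \in f C T) + (c \in f C T')) ->
  monotonic (approval f).
Proof.
move=> f_le C n votes votes' c improve; rewrite !inE => /forallP c_max.
apply/forallP=> d.
have score_le : approval_score f votes' d + approval_score f votes c <=
                approval_score f votes d + approval_score f votes' c.
  by rewrite !approval_scoreE -!big_split; apply: leq_sum => i _; apply: f_le.
rewrite -(leq_add2r (approval_score f votes c)) (leq_trans score_le) //.
by rewrite [leqRHS]addnC leq_add2r.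
Qed.

Lemma TC_approval_monotonic : monotonic (approval TC).
Proof. by apply: approval_monotonic => C c d T T' /TC_improves_le. Qed.

Section Enumeration.
Variables (T : finType) (s : seq T).
Hypothesis mem_s : forall x, x \in s.

Lemma forallb_all (P : pred T) : [forall x, P x] = all P s.
Proof. by apply/forallP/allP=> [allP x _ | allP x]; apply: allP. Qed.

Lemma existsb_has (P : pred T) : [exists x, P x] = has P s.
Proof. by apply/existsP/hasP=> [[x Px] | [x _ Px]]; exists x. Qed.

Hypothesis s_uniq : uniq s.

Lemma card_set_count (P : pred T) : #|[set x | P x]| = count P s.
Proof.
rewrite -size_filter -(card_uniqP (filter_uniq P s_uniq)).
by apply: eq_card => x; rewrite inE mem_filter mem_s andbT.
Qed.

End Enumeration.

Section EnumeratedCandidates.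
Variables (C : finType) (s : seq C).
Hypothesis mem_s : forall x, x \in s.

Definition tournamentb (r : rel C) : bool :=
  all (fun x => all (fun y =>
    (r x y ==> ~~ r y x) && ((x != y) ==> r x y || r y x)) s) s.

Section OfRelation.
Variables (r : rel C) (r_tournament : tournamentb r).

Lemma tournamentb_asym x y : r x y -> ~~ r y x.
Proof.
by move: r_tournament => /allP/(_ x (mem_s x))/allP/(_ y (mem_s y))/andP[/implyP].
Qed.

Lemma tournamentb_irr x : ~~ r x x.
Proof. by apply/negP=> rxx; move/negP: (tournamentb_asym rxx). Qed.

Lemma tournamentb_total x y : x != y -> r x y || r y x.
Proof.
by move: r_tournament => /allP/(_ x (mem_s x))/allP/(_ y (mem_s y))/andP[_ /implyP].
Qed.

Definition tournament_of : tournament C :=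
  Tournament tournamentb_irr tournamentb_asym tournamentb_total.

End OfRelation.

Lemma improves_enum (c : C) (T T' : tournament C) :
  all (fun x => all (fun y => (x != c) ==> (y != c) ==> (T x y == T' x y)) s) s ->
  all (fun b => T c b ==> T' c b) s ->
  improves c T T'.
Proof.
move=> /allP same /allP stronger; split=> [x y xc yc | b].
  by move/allP: (same x (mem_s x)) => /(_ y (mem_s y)); rewrite xc yc => /eqP.
exact/implyP/stronger.
Qed.

Lemma mem_UC_enum (T : tournament C) (a : C) :
  (a \in UC T) = all (fun b => (b != a) ==> T a b || has (fun x => T a x && T x b) s) s.
Proof.
rewrite inE /king (forallb_all mem_s).
by under eq_all do rewrite (existsb_has mem_s).
Qed.

Hypothesis s_uniq : uniq s.

Lemma mem_CO_enum (T : tournament C) (a : C) :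
  (a \in CO T) = all (fun b => count (T b) s <= count (T a) s) s.
Proof.
rewrite inE (forallb_all mem_s).
by under eq_all do rewrite /outdeg !(card_set_count mem_s s_uniq).
Qed.

Lemma mem_approval_enum (f : tsolution) (g : tournament C -> pred C)
    (n : nat) (t : seq 'I_n) :
  (forall i, i \in t) -> uniq t -> (forall T a, (a \in f C T) = g T a) ->
  forall (votes : 'I_n -> tournament C) (c : C),
  (c \in approval f votes) =
  all (fun d => count (fun i => g (votes i) d) t <= count (fun i => g (votes i) c) t) s.
Proof.
move=> mem_t t_uniq fE votes c; rewrite inE (forallb_all mem_s).
apply: eq_all => d; rewrite /approval_score !(card_set_count mem_t t_uniq).
by congr (_ <= _); apply: eq_count => i; apply: fE.
Qed.

End EnumeratedCandidates.

Lemma not_monotonic_approval (f : tsolution) (C : finType) (n : nat)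
    (votes votes' : 'I_n -> tournament C) (c : C) :
  (forall i, improves c (votes i) (votes' i)) ->
  c \in approval f votes -> c \notin approval f votes' ->
  ~ monotonic (approval f).
Proof. by move=> improve win lose mono; rewrite (mono _ _ _ _ _ improve win) in lose. Qed.

Definition two_votes (C : finType) (A B : tournament C) : 'I_2 -> tournament C :=
  fun i => if i == ord0 then A else B.

Lemma improves_two_votes (C : finType) (c : C) (A A' B : tournament C) :
  improves c A A' -> forall i, improves c (two_votes A B i) (two_votes A' B i).
Proof. by move=> improve i; rewrite /two_votes; case: (i == ord0). Qed.

Definition ord2 : seq 'I_2 := [:: @Ordinal 2 0 isT; @Ordinal 2 1 isT].

Lemma mem_ord2 i : i \in ord2.
Proof. by case: i => [[|[|m]] lt_i]. Qed.

Definition ord4 : seq 'I_4 :=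
  [:: @Ordinal 4 0 isT; @Ordinal 4 1 isT; @Ordinal 4 2 isT; @Ordinal 4 3 isT].

Lemma mem_ord4 i : i \in ord4.
Proof. by case: i => [[|[|[|[|m]]]] lt_i]. Qed.

Definition edges (E : seq (nat * nat)) : rel 'I_4 := fun x y => (val x, val y) \in E.

Definition tournament4 (E : seq (nat * nat)) (E_tournament : tournamentb ord4 (edges E)) :=
  tournament_of mem_ord4 E_tournament.

(* UC is {0, 2, 3} in vote 1, {0, 1, 3} in vote 1' and {1} in vote 2. Once 0
   beats 2, candidate 1 reaches 2 and 3 through 0 and becomes a king: all four
   candidates tie before, and 1 wins alone after. *)
Definition UC_vote1 := @tournament4 [:: (0, 3); (1, 0); (2, 0); (2, 1); (3, 1); (3, 2)] erefl.
Definition UC_vote1' := @tournament4 [:: (0, 2); (0, 3); (1, 0); (2, 1); (3, 1); (3, 2)] erefl.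
Definition UC_vote2 := @tournament4 [:: (1, 0); (1, 2); (1, 3); (2, 0); (3, 0); (3, 2)] erefl.

Lemma UC_approval_not_monotonic : ~ monotonic (approval UC).
Proof.
have approvalE := mem_approval_enum mem_ord4 mem_ord2 (erefl true) (mem_UC_enum mem_ord4).
apply: (@not_monotonic_approval _ _ _ (two_votes UC_vote1 UC_vote2)
          (two_votes UC_vote1' UC_vote2) ord0).
- by apply/improves_two_votes/(improves_enum mem_ord4); vm_compute.
- by rewrite approvalE; vm_compute.
- by rewrite approvalE; vm_compute.
Qed.

(* Vote 1 is the linear order 3 > 2 > 1 > 0; once 0 beats 3, candidates 2 and
   3 share the top outdegree. With CO = {0, 2} in vote 2, candidates 0, 2, 3
   tie before, and 2 wins alone after. *)
Definition CO_vote1 := @tournament4 [:: (1, 0); (2, 0); (2, 1); (3, 0); (3, 1); (3, 2)] erefl.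
Definition CO_vote1' := @tournament4 [:: (0, 3); (1, 0); (2, 0); (2, 1); (3, 1); (3, 2)] erefl.
Definition CO_vote2 := @tournament4 [:: (0, 2); (0, 3); (1, 0); (2, 1); (2, 3); (3, 1)] erefl.

Lemma CO_approval_not_monotonic : ~ monotonic (approval CO).
Proof.
have approvalE := mem_approval_enum mem_ord4 mem_ord2 (erefl true)
  (mem_CO_enum mem_ord4 (erefl true)).
apply: (@not_monotonic_approval _ _ _ (two_votes CO_vote1 CO_vote2)
          (two_votes CO_vote1' CO_vote2) ord0).
- by apply/improves_two_votes/(improves_enum mem_ord4); vm_compute.
- by rewrite approvalE; vm_compute.
- by rewrite approvalE; vm_compute.
Qed.

Theorem theorem3 :
  monotonic (approval TC) /\
  ~ monotonic (approval UC) /\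
  ~ monotonic (approval CO).
Proof.
exact: conj TC_approval_monotonic
  (conj UC_approval_not_monotonic CO_approval_not_monotonic).
Qed.
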